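(* Let $\Omega$ be a measurable space with reference measure $\mathrm{d}\mathbf{y}$, let $\Theta$ be a parameter set, and for each $\bm{\theta}\in\Theta$ let $f_{\bm{\theta}}(\cdot\mid\cdot):\Omega\times\Omega\to\mathbb{R}$ be such that $0<\int_\Omega\exp\{f_{\bm{\theta}}(\mathbf{y}\mid\mathbf{u})\}\,\mathrm{d}\mathbf{y}<\infty$ for all $\mathbf{u}\in\Omega$. Given a fixed initial point $\mathbf{y}_0\in\Omega$ and observations $\mathbf{y}_1,\ldots,\mathbf{y}_n\in\Omega$, define $$\mathcal{L}(\bm{\theta})=\sum_{t=1}^n\left[f_{\bm{\theta}}(\mathbf{y}_t\mid\mathbf{y}_{t-1})-\log\int_\Omega\exp\{f_{\bm{\theta}}(\mathbf{y}\mid\mathbf{y}_{t-1})\}\,\mathrm{d}\mathbf{y}\right]$$ and, for $\bm{\theta}\in\Theta$ and $\bm{\nu}=(\nu_0,\ldots,\nu_{n-1})\in\mathbb{R}^n$, $$\mathcal{M}(\bm{\theta},\bm{\nu})=\sum_{t=1}^n\{f_{\bm{\theta}}(\mathbf{y}_t\mid\mathbf{y}_{t-1})+\nu_{t-1}\}-\int_\Omega\left[\sum_{t=1}^n\exp\{f_{\bm{\theta}}(\mathbf{y}\mid\mathbf{y}_{t-1})+\nu_{t-1}\}\right]\mathrm{d}\mathbf{y}.$$ Then the set of points $\bm{\theta}^\star\in\operatorname{argmax}_{\bm{\theta}\in\Theta}\mathcal{L}(\bm{\theta})$ coincides with the set of points $\tilde{\bm{\theta}}$ such that $(\tilde{\bm{\theta}},\bm{\nu}^\star)\in\operatorname{argmax}_{\bm{\theta}\in\Theta,\bm{\nu}\in\mathbb{R}^n}\mathcal{M}(\bm{\theta},\bm{\nu})$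 for some $\bm{\nu}^\star\in\mathbb{R}^n$.
   Context: $\mathcal{L}$ is the log-likelihood of a Markov chain with unnormalised transition density $p_{\bm{\theta}}(\mathbf{y}_t\mid\mathbf{y}_{t-1})\propto\exp\{f_{\bm{\theta}}(\mathbf{y}_t\mid\mathbf{y}_{t-1})\}$, the initial point $\mathbf{y}_0$ being treated as a constant. *)

From HB Require Import structures.
From mathcomp Require Import all_boot all_order all_algebra.
From mathcomp Require Import all_classical all_reals all_analysis.
Set Implicit Arguments. Unset Strict Implicit. Unset Printing Implicit Defensive.
Import Order.TTheory GRing.Theory Num.Theory.
Local Open Scope ring_scope.
Local Open Scope ereal_scope.

(* T : measurable space Omega, mu : reference measure dy,
   Theta : parameter set (a type), f th y u = f_theta(y | u),
   ys : nat -> T with ys 0 = y_0 (initial point) and ys 1 .. ys n the data. *)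

Definition normconst d (T : measurableType d) (R : realType)
  (mu : {measure set T -> \bar R}) (Theta : Type)
  (f : Theta -> T -> T -> R) (th : Theta) (u : T) : \bar R :=
  \int[mu]_(y in setT) (expR (f th y u))%:E.

Definition loglik d (T : measurableType d) (R : realType)
  (mu : {measure set T -> \bar R}) (Theta : Type)
  (f : Theta -> T -> T -> R) (n : nat) (ys : nat -> T) (th : Theta) : R :=
  (\sum_(t < n) (f th (ys t.+1) (ys t) - ln (fine (normconst mu f th (ys t)))))%R.

Definition auxobj d (T : measurableType d) (R : realType)
  (mu : {measure set T -> \bar R}) (Theta : Type)
  (f : Theta -> T -> T -> R) (n : nat) (ys : nat -> T)
  (th : Theta) (nu : 'I_n -> R) : \bar R :=
  (\sum_(t < n) (f th (ys t.+1) (ys t) + nu t))%R%:E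
  - \int[mu]_(y in setT) (\sum_(t < n) expR (f th y (ys t) + nu t))%R%:E.

From HB Require Import structures.
From mathcomp Require Import all_boot all_order all_algebra.
From mathcomp Require Import all_classical all_reals all_analysis.
From mathcomp Require Import lra.
Import Order.TTheory GRing.Theory Num.Theory.
Set Implicit Arguments. Unset Strict Implicit. Unset Printing Implicit Defensive.
Local Open Scope ring_scope.
Local Open Scope ereal_scope.

(* For a fixed [theta], M(theta, .) separates over the [nu_t], each term being
   [nu - e^nu c] with [c] the normalising constant at [y_(t-1)].  This concave
   function of [nu] attains its maximum [- ln c - 1] at [nu = - ln c], so the
   profile [sup_nu M(theta, nu)] equals [L(theta) - n]; maximising M jointly is
   therefore the same as maximising L. *)

Lemma argmax_profile (disp : Order.disp_t) (V : porderType disp) (A B : Type)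
    (M : A -> B -> V) (P : A -> V) (bopt : A -> B) :
    (forall a b, (M a b <= P a)%O) -> (forall a, M a (bopt a) = P a) ->
  forall a, (forall a', (P a' <= P a)%O) <->
            (exists b, forall a' b', (M a' b' <= M a b)%O).
Proof.
move=> M_le M_opt a; split=> [P_max | [b M_max] a'].
- by exists (bopt a) => a' b'; rewrite M_opt; exact: le_trans (M_le a' b') (P_max a').
- by rewrite -M_opt; exact: le_trans (M_max a' (bopt a')) (M_le a b).
Qed.

Section ExpProfile.
Variable R : realType.
Local Open Scope ring_scope.

Lemma sub_expRM_le (c x : R) : 0 < c -> x - expR x * c <= - ln c - 1.
Proof.
move=> c_gt0; have := expR_ge1Dx (x + ln c).
by rewrite expRD lnK ?posrE // mulrC; lra.
Qed.

Lemma sub_expRM_lnN (c : R) : 0 < c -> - ln c - expR (- ln c) * c = - ln c - 1.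
Proof. by move=> c_gt0; rewrite expRN lnK ?posrE // mulVf ?gt_eqF // mulr1. Qed.

End ExpProfile.

Lemma integral_sum_expRD d (T : measurableType d) (R : realType)
    (mu : {measure set T -> \bar R}) (n : nat) (g : 'I_n -> T -> R) (a : 'I_n -> R) :
    (forall t, measurable_fun setT (g t)) ->
  \int[mu]_(y in setT) (\sum_(t < n) expR (g t y + a t))%:E =
  \sum_(t < n) (expR (a t))%:E * \int[mu]_(y in setT) (expR (g t y))%:E.
Proof.
move=> g_meas.
under eq_fun do rewrite -sumEFin.
rewrite ge0_integral_sum //; last first.
  move=> t; apply/measurable_realfun.measurable_EFinP; apply: measurableT_comp => //.
  exact: measurable_realfun.measurable_funD.
apply: eq_bigr => t _; under eq_fun do rewrite addrC expRD EFinM.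
apply: ge0_integralZl_EFin => //.
by apply/measurable_realfun.measurable_EFinP; exact: measurableT_comp.
Qed.

Section Model.
Variables (d : measure_display) (T : measurableType d) (R : realType)
  (mu : {measure set T -> \bar R}) (Theta : Type)
  (f : Theta -> T -> T -> R) (n : nat) (ys : nat -> T).
Hypothesis hmeas : forall th u, measurable_fun setT (fun y => f th y u).
Hypothesis hpos : forall th u, 0 < normconst mu f th u.
Hypothesis hfin : forall th u, normconst mu f th u < +oo.

Let c th u := fine (normconst mu f th u).

Let c_gt0 th u : (0 < c th u)%R.
Proof. by have := hpos th u; have := hfin th u; rewrite /c; case: normconst. Qed.

Let normconstE th u : normconst mu f th u = (c th u)%:E.
Proof. by have := hpos th u; have := hfin th u; rewrite /c; case: normconst. Qed.

Lemma auxobjE th (nu : 'I_n -> R) : auxobj mu f ys th nu =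
  (\sum_(t < n) (f th (ys t.+1) (ys t) + nu t - expR (nu t) * c th (ys t)))%R%:E.
Proof.
rewrite /auxobj (integral_sum_expRD _ _ (fun t => hmeas th (ys t))) sumrB EFinB.
congr (_ - _); rewrite -sumEFin; apply: eq_bigr => t _.
by have := normconstE th (ys t); rewrite /normconst => ->; rewrite EFinM.
Qed.

Definition nu_opt th : 'I_n -> R := fun t => (- ln (c th (ys t)))%R.

Lemma auxobj_le_loglik th (nu : 'I_n -> R) :
  auxobj mu f ys th nu <= (loglik mu f n ys th - n%:R)%R%:E.
Proof.
rewrite auxobjE lee_fin /loglik -[n in n%:R]card_ord -sumr_const -sumrB.
apply: ler_sum => t _; have := sub_expRM_le (nu t) (c_gt0 th (ys t)).
by rewrite /c; lra.
Qed.

Lemma auxobj_nu_opt th :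
  auxobj mu f ys th (nu_opt th) = (loglik mu f n ys th - n%:R)%R%:E.
Proof.
rewrite auxobjE /loglik -[n in n%:R]card_ord -sumr_const -sumrB.
congr EFin; apply: eq_bigr => t _; have := sub_expRM_lnN (c_gt0 th (ys t)).
by rewrite /nu_opt /c; lra.
Qed.

End Model.

Theorem theorem2 (d : measure_display) (T : measurableType d) (R : realType)
  (mu : {measure set T -> \bar R}) (Theta : Type)
  (f : Theta -> T -> T -> R) (n : nat) (ys : nat -> T)
  (hmeas : forall th u, measurable_fun setT (fun y => f th y u))
  (hpos : forall th u, 0 < normconst mu f th u)
  (hfin : forall th u, normconst mu f th u < +oo) :
  forall th : Theta,
    (forall th' : Theta, (loglik mu f n ys th' <= loglik mu f n ys th)%R) <->
    (exists nu : 'I_n -> R,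
       forall (th' : Theta) (nu' : 'I_n -> R),
         auxobj mu f ys th' nu' <= auxobj mu f ys th nu).
Proof.
move=> th; apply: iff_trans (argmax_profile (auxobj_le_loglik ys hmeas hpos hfin)
                                        (auxobj_nu_opt n ys hmeas hpos hfin) th).
by split=> L_max th'; have := L_max th'; rewrite lee_fin lerD2r.
Qed.
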